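(* Let $\mathcal{G}$ be a causal diagram with observed endogenous variables $\mathbf{O}$ and latent endogenous variables $\mathbf{L}$, let $\Pi$ be a policy space, and let $\mathbf{Y}\subseteq\mathbf{V}$. If $\mathbf{Y}\cap\mathbf{L}\neq\emptyset$, then $P(\mathbf{y}\mid\mathrm{do}(\pi))$ is not identifiable with respect to $\langle\mathcal{G},\Pi\rangle$.
   Context: A structural causal model (SCM) $M = \langle \mathbf{U}, \mathbf{V}, \mathcal{F}, P(\mathbf{u})\rangle$ has exogenous variables $\mathbf{U}$ drawn from $P(\mathbf{u})$, endogenous variables $\mathbf{V}$, and for each $V$ a function $V\leftarrow f_V(\mathrm{Pa}_V,U_V)$. A POSCM is $\langle M,\mathbf{O},\mathbf{L}\rangle$ with $\mathbf{O},\mathbf{L}$ a partition of $\mathbf{V}$ into observed and latent variables; $P(\mathbf{o})$ is the observational distribution. The causal diagram $\mathcal{G}$ has an arrow $V_j\to V_i$ when $V_j\in\mathrm{Pa}_{V_i}$ and a bidirected arrow $V_i\leftrightarrow V_j$ when $U_{V_i}\cap U_{V_j}\ne\emptyset$; $\mathcal{M}_{\langle\mathcal{G}\rangle}$ is the class of POSCMs with diagram $\mathcal{G}$. There is a distinguished action variable $X\in\mathbf{O}$; $\mathcal{G}_{\overline{X}}$ is $\mathcal{G}$ with arrows into $X$ removed. A policy space $\Pi$ is determined by covariates $\mathrm{Pa}(\Pi)\subseteq\mathbf{O}\setminus\mathrm{De}(X)_{\mathcal{G}_{\overline{X}}}$ and consists of all maps $\pi(x\mid\mathrm{pa}(\Pi))$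 to distributions over $X$. $\mathrm{do}(\pi)$ replaces $f_X$ by drawing $X\sim\pi$: $P(\mathbf{v}\mid\mathrm{do}(\pi))=\sum_{\mathbf{u}}P(\mathbf{u})\prod_{V\ne X}P(v\mid\mathrm{pa}_V,u_V)\pi(x\mid\mathrm{pa}(\Pi))$. $P(\mathbf{y}\mid\mathrm{do}(\pi))$ is identifiable w.r.t. $\langle\mathcal{G},\Pi\rangle$ if $P(\mathbf{y}\mid\mathrm{do}(\pi);M)$ is uniquely computable from $P(\mathbf{o};M)$ and $\pi$ for every $M\in\mathcal{M}_{\langle\mathcal{G}\rangle}$ and every $\pi\in\Pi$. *)

From HB Require Import structures.
From mathcomp Require Import all_boot all_order all_algebra.
Set Implicit Arguments. Unset Strict Implicit. Unset Printing Implicit Defensive.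
Import Order.TTheory GRing.Theory Num.Theory.
Local Open Scope ring_scope.

Definition asg (n : nat) (d : 'I_n -> nat) := {dffun forall i : 'I_n, 'I_(d i)}.

(* A causal diagram: directed edges (dir j i means j -> i) and bidirected edges. *)
Record diagram (n : nat) := Diagram { dir : rel 'I_n; bi : rel 'I_n }.

Definition is_causal_diagram n (G : diagram n) : Prop :=
  (forall i j, dir G j i -> ~~ connect (dir G) i j) /\
  (forall i j, bi G i j = bi G j i) /\ (forall i, ~~ bi G i i).

Definition parents n (G : diagram n) (i : 'I_n) : {set 'I_n} :=
  [set j | dir G j i].

(* Descendants of X (including X) in G with arrows into X removed. *)
Definition desc_cutX n (G : diagram n) (X : 'I_n) : {set 'I_n} :=
  [set k | connect (fun a b => dir G a b && (b != X)) X k].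

Definition agree n (d : 'I_n -> nat) (A : {set 'I_n}) (v w : asg d) : bool :=
  [forall i in A, v i == w i].

(* An SCM over endogenous variables 'I_n with domains d: exogenous variables
   'I_m with domains 'I_(e k), a joint distribution Pu over them, the set
   Uof i of exogenous arguments of each endogenous i, and functions f i. *)
Record SCM (R : numDomainType) (n : nat) (d : 'I_n -> nat) := MkSCM {
  nU : nat;
  eU : 'I_nU -> nat;
  Pu : {dffun forall k : 'I_nU, 'I_(eU k)} -> R;
  Uof : 'I_n -> {set 'I_nU};
  fV : forall i : 'I_n, asg d -> {dffun forall k : 'I_nU, 'I_(eU k)} -> 'I_(d i)
}.
Arguments Pu {R n d} M _ : rename.
Arguments Uof {R n d} M _ : rename.
Arguments fV {R n d} M i _ _ : rename.
Arguments nU {R n d} M : rename.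
Arguments eU {R n d} M _ : rename.

Definition exo (R : numDomainType) n (d : 'I_n -> nat) (M : SCM R d) :=
  {dffun forall k : 'I_(nU M), 'I_(eU M k)}.

(* M belongs to the class M_<G>: P(u) is a distribution, f_V depends only on
   Pa_V (the parents in G) and U_V, and V_i <-> V_j iff U_Vi and U_Vj meet. *)
Definition in_class (R : numDomainType) n (d : 'I_n -> nat) (G : diagram n)
    (M : SCM R d) : Prop :=
  (forall u : exo M, 0 <= Pu M u) /\ (\sum_(u : exo M) Pu M u = 1) /\
  (forall i (v v' : asg d) (u u' : exo M), agree (parents G i) v v' ->
       [forall k in Uof M i, u k == u' k] -> fV M i v u = fV M i v' u') /\
  (forall i j, i != j -> bi G i j = (Uof M i :&: Uof M j != set0)).

Definition Pobs (R : numDomainType) n (d : 'I_n -> nat) (M : SCM R d)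
    (v : asg d) : R :=
  \sum_(u : exo M) Pu M u * \prod_i (if v i == fV M i v u then 1 else 0).

Definition Pdo (R : numDomainType) n (d : 'I_n -> nat) (M : SCM R d)
    (X : 'I_n) (pi : asg d -> 'I_(d X) -> R) (v : asg d) : R :=
  \sum_(u : exo M) Pu M u * (\prod_(i | i != X) (if v i == fV M i v u then 1 else 0))
         * pi v (v X).

(* Marginal on A of a distribution on full assignments, evaluated at the
   A-part of v:  P(a) = sum_{w agreeing with v on A} P(w). *)
Definition marg (R : numDomainType) n (d : 'I_n -> nat) (A : {set 'I_n})
    (P : asg d -> R) (v : asg d) : R :=
  \sum_(w | agree A w v) P w.

Definition is_policy (R : numDomainType) n (d : 'I_n -> nat) (X : 'I_n)
    (C : {set 'I_n}) (pi : asg d -> 'I_(d X) -> R) : Prop :=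
  (forall v x, 0 <= pi v x) /\ (forall v, \sum_x pi v x = 1) /\
  (forall v w, agree C v w -> pi v = pi w).

Definition identifiable (R : numDomainType) n (d : 'I_n -> nat) (G : diagram n)
    (O : {set 'I_n}) (X : 'I_n) (C : {set 'I_n}) (Y : {set 'I_n}) : Prop :=
  forall (M1 M2 : SCM R d), in_class G M1 -> in_class G M2 ->
    (forall v, marg O (Pobs M1) v = marg O (Pobs M2) v) ->
    forall (pi : asg d -> 'I_(d X) -> R), is_policy C pi ->
      forall v, marg Y (Pdo M1 pi) v = marg Y (Pdo M2 pi) v.

From HB Require Import structures.
From mathcomp Require Import all_boot all_order all_algebra.
From mathcomp Require Import reals.
Set Implicit Arguments. Unset Strict Implicit. Unset Printing Implicit Defensive.
Import Order.TTheory GRing.Theory Num.Theory.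

(* A latent variable is invisible in P(o) but not in P(y | do(pi)).  Take two
   SCMs without randomness that set every variable to a constant, the two
   constant assignments c0, c1 differing only at a latent l \in Y; both fit any
   diagram, since a bidirected edge only asks for a shared exogenous variable,
   which may be trivial.  Their observational distributions are the point
   masses at c0 and c1, which have the same O-marginal, while under the
   deterministic policy X := c0 X their interventional Y-marginals at c0 are
   1 and 0. *)

Lemma exists_asg_differing_at n (d : 'I_n -> nat) (l : 'I_n) :
  (forall i, 1 < d i) ->
  exists c0 c1 : asg d, c0 l != c1 l /\ forall i, i != l -> c0 i = c1 i.
Proof.
move=> d_gt1.
pose c0 : asg d := [ffun i => Ordinal (ltnW (d_gt1 i))].
exists c0, [ffun i => if i == l then Ordinal (d_gt1 i) else c0 i]; split.
  by rewrite !ffunE eqxx.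
by move=> i /negbTE il; rewrite [RHS]ffunE il.
Qed.

Section Delta.

Local Open Scope ring_scope.
Variable R : numDomainType.

Definition delta {T : eqType} (x y : T) : R :=
  if y == x then 1 else 0.

Lemma delta_ge0 (T : eqType) (x y : T) : 0 <= delta x y.
Proof. by rewrite /delta; case: ifP. Qed.

Lemma sum_delta (T : finType) (x : T) :
  \sum_y delta x y = 1.
Proof.
by rewrite (bigD1 x) //= /delta eqxx big1 ?addr0 // => y /negbTE ->.
Qed.

Lemma prod_delta (I : finType) (T : I -> eqType)
    (P : pred I) (c v : forall i, T i) :
  \prod_(i | P i) delta (c i) (v i) = if [forall i, P i ==> (v i == c i)] then 1 else 0.
Proof.
case: (boolP [forall i, P i ==> (v i == c i)]) => [/forallP eq_cv | /forallPn[i]].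
  by apply: big1 => i Pi; rewrite /delta (implyP (eq_cv i) Pi).
rewrite negb_imply => /andP[Pi /negbTE neq_ci].
by rewrite (bigD1 i) //= /delta neq_ci mul0r.
Qed.

Lemma det_policy_is_policy n (d : 'I_n -> nat) (X : 'I_n)
    (C : {set 'I_n}) (x : 'I_(d X)) :
  is_policy C (fun _ : asg d => delta x).
Proof. by split=> [v y|]; [exact: delta_ge0 | split=> // v; exact: sum_delta]. Qed.

End Delta.

Section ConstantSCM.

Local Open Scope ring_scope.
Variables (R : numDomainType) (n : nat) (d : 'I_n -> nat) (G : diagram n).

(* Exogenous variables are indexed by ordered pairs (a, b); that of a pair
   with a <-> b is shared by a and b, which realizes exactly the edges of G. *)
Definition edge_exo_of (i : 'I_n) : {set 'I_#|{: 'I_n * 'I_n}|} :=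
  [set k | let: (a, b) := enum_val k in bi G a b && ((a == i) || (b == i))].

Definition const_scm (c : asg d) : SCM R d :=
  @MkSCM R n d _ (fun _ => 1%N) (delta R [ffun => ord0]) edge_exo_of
    (fun i _ _ => c i).

Lemma const_scm_in_class (c : asg d) :
  (forall i j, bi G i j = bi G j i) -> in_class G (const_scm c).
Proof.
move=> bi_sym; split; [exact: delta_ge0 | split; [exact: sum_delta | split=> //]].
move=> i j neq_ij /=; apply/idP/set0Pn => [bi_ij | [k]].
  by exists (enum_rank (i, j)); rewrite !inE enum_rankK bi_ij !eqxx orbT.
rewrite !inE; case: (enum_val k) => a b /andP[/andP[bi_ab ai] /andP[_ bj]].
case/orP: ai bj => /eqP ai /orP[] /eqP bj; subst=> //; rewrite ?eqxx // in neq_ij.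
by rewrite bi_sym.
Qed.

Lemma Pobs_const_scm (c v : asg d) : Pobs (const_scm c) v = delta R c v.
Proof.
rewrite /Pobs /= -big_distrl /= sum_delta mul1r prod_delta /delta.
congr (if _ then _ else _); apply/forallP/eqP => [eq_vc | -> i].
  by apply/ffunP => i; apply/eqP; exact: eq_vc.
by rewrite eqxx.
Qed.

Lemma Pdo_const_scm (X : 'I_n) (c v : asg d) (x : 'I_(d X)) :
  c X = x -> Pdo (const_scm c) (fun _ => delta R x) v = delta R c v.
Proof.
move=> <-; rewrite /Pdo /= -!big_distrl /= sum_delta mul1r prod_delta /delta.
case: (eqVneq v c) => [-> | neq_vc].
  by rewrite eqxx mulr1; case: forallP => // [[i]]; rewrite eqxx implybT.
case: forallP => [eq_vc | _]; last by rewrite mul0r.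
case: eqP => [eq_vcX | _]; last by rewrite mulr0.
case/eqP: neq_vc; apply/ffunP => i; case: (eqVneq i X) => [-> // | iX].
by apply/eqP; exact: (implyP (eq_vc i) iX).
Qed.

Lemma marg_delta (A : {set 'I_n}) (c v : asg d) :
  marg A (delta R c) v = if agree A c v then 1 else 0.
Proof.
rewrite /marg /delta; case: ifP => [agree_cv | /negbT disagree_cv].
  by rewrite (bigD1 c) //= eqxx big1 ?addr0 // => w /andP[_ /negbTE ->].
by apply: big1 => w agree_wv; case: eqP agree_wv => // ->; rewrite (negbTE disagree_cv).
Qed.

Lemma marg_Pobs_const_scm (A : {set 'I_n}) (c v : asg d) :
  marg A (Pobs (const_scm c)) v = if agree A c v then 1 else 0.
Proof. by rewrite -marg_delta; apply: eq_bigr => w _; exact: Pobs_const_scm. Qed.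

Lemma marg_Pdo_const_scm (A : {set 'I_n}) (X : 'I_n) (c v : asg d) (x : 'I_(d X)) :
  c X = x ->
  marg A (Pdo (const_scm c) (fun _ => delta R x)) v = if agree A c v then 1 else 0.
Proof. by move=> cX; rewrite -marg_delta; apply: eq_bigr => w _; exact: Pdo_const_scm. Qed.

End ConstantSCM.

Theorem corollary1 (R : realType) (n : nat) (d : 'I_n -> nat)
    (G : diagram n) (O : {set 'I_n}) (X : 'I_n) (C : {set 'I_n})
    (Y : {set 'I_n}) :
  is_causal_diagram G ->
  (forall i, 1 < d i) ->
  X \in O ->
  C \subset O :\: desc_cutX G X ->
  (exists l, l \in Y /\ l \notin O) ->
  ~ identifiable R d G O X C Y.
Proof.
move=> [_ [bi_sym _]] d_gt1 XO _ [l [lY lO]] identY.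
have [c0 [c1 [neq_l eq_off_l]]] := exists_asg_differing_at l d_gt1.
have eq_on_O i : i \in O -> c0 i = c1 i.
  by move=> iO; apply: eq_off_l; apply: contraNneq lO => <-.
have same_obs v : marg O (Pobs (const_scm R G c0)) v = marg O (Pobs (const_scm R G c1)) v.
  rewrite !marg_Pobs_const_scm; congr (if _ then _ else _).
  by apply: eq_forallb_in => i iO; rewrite eq_on_O.
have := identY _ _ (const_scm_in_class R c0 bi_sym) (const_scm_in_class R c1 bi_sym)
  same_obs _ (det_policy_is_policy R C (c0 X)) c0.
rewrite !marg_Pdo_const_scm ?eq_on_O //.
have -> : agree Y c0 c0 by apply/forallP => i; rewrite eqxx implybT.
have -> : agree Y c1 c0 = false by apply/negbTE/forallPn; exists l; rewrite lY eq_sym.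
by move/eqP; rewrite oner_eq0.
Qed.
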